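(* Let $G$ be a non-supergraceful graph having a semitotal labeling $\varphi$ with $1 \in N(\varphi)$. Then there is a connected supergraceful graph $H$ containing an induced subgraph isomorphic to $G$.
   Context: Graphs are finite, simple. For a labeling $\varphi: V(G) \to \mathbb{Z}_{>0}$ let $N(\varphi) = \{\varphi(x) : x \in V(G)\}$ and $E(\varphi) = \{|\varphi(x)-\varphi(y)| : xy \in E(G)\}$. A total labeling of a graph with $p$ nodes and $q$ edges is a map $\varphi$ such that the $p$ node labels and $q$ edge labels are pairwise distinct and $N(\varphi) \cup E(\varphi) = \{1,\dots,p+q\}$; a graph is supergraceful if it has one, non-supergraceful otherwise. For non-supergraceful $G$, let $q_0>0$ be the least integer such that there is a labeling with all node and edge labels pairwise distinct and $N(\varphi)\cup E(\varphi) \subseteq \{1,\dots,p+q+q_0\}$; such a labeling is a semitotal labeling. *)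

From mathcomp Require Import all_boot.
Set Implicit Arguments. Unset Strict Implicit. Unset Printing Implicit Defensive.

Definition simple_graph (V : finType) (e : rel V) : Prop :=
  symmetric e /\ irreflexive e.

Definition absdiff (a b : nat) : nat := maxn a b - minn a b.

Definition edges (V : finType) (e : rel V) : {set {set V}} :=
  [set [set x; y] | x in V, y in V & e x y].

Definition nnodes (V : finType) (e : rel V) : nat := #|V|.
Definition nedges (V : finType) (e : rel V) : nat := #|edges e|.

Definition in_N (V : finType) (phi : V -> nat) (k : nat) : Prop :=
  exists x, phi x = k.
Definition in_E (V : finType) (e : rel V) (phi : V -> nat) (k : nat) : Prop :=
  exists x y, e x y /\ absdiff (phi x) (phi y) = k.

Definition distinct_labeling (V : finType) (e : rel V) (phi : V -> nat) : Prop :=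
  (forall x, 0 < phi x) /\
  injective phi /\
  (forall x y u v, e x y -> e u v ->
     absdiff (phi x) (phi y) = absdiff (phi u) (phi v) ->
     [set x; y] = [set u; v]) /\
  (forall z x y, e x y -> phi z <> absdiff (phi x) (phi y)).

Definition total_labeling (V : finType) (e : rel V) (phi : V -> nat) : Prop :=
  distinct_labeling e phi /\
  (forall k, (1 <= k <= nnodes e + nedges e) <-> (in_N phi k \/ in_E e phi k)).

Definition supergraceful (V : finType) (e : rel V) : Prop :=
  exists phi, total_labeling e phi.

Definition bounded_labeling (V : finType) (e : rel V) (phi : V -> nat) (m : nat)
  : Prop :=
  distinct_labeling e phi /\
  (forall k, in_N phi k \/ in_E e phi k -> 1 <= k <= m).

Definition is_q0 (V : finType) (e : rel V) (q0 : nat) : Prop :=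
  0 < q0 /\
  (exists phi, bounded_labeling e phi (nnodes e + nedges e + q0)) /\
  (forall q', 0 < q' ->
     (exists psi, bounded_labeling e psi (nnodes e + nedges e + q')) ->
     q0 <= q').

Definition semitotal_labeling (V : finType) (e : rel V) (phi : V -> nat) : Prop :=
  exists q0, is_q0 e q0 /\ bounded_labeling e phi (nnodes e + nedges e + q0).

Definition connected_graph (V : finType) (e : rel V) : Prop :=
  forall x y : V, connect e x y.

Definition has_induced_copy (V W : finType) (e : rel V) (f : rel W) : Prop :=
  exists h : V -> W, injective h /\ forall x y, f (h x) (h y) = e x y.

From mathcomp Require Import all_boot zify.
Set Implicit Arguments. Unset Strict Implicit. Unset Printing Implicit Defensive.

(* Let phi be a labeling of G with pairwise distinct labels and K its largest
   label; nothing else about phi is needed, and 1 \in N(phi) only serves to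
   make G nonempty. Add one new vertex for each label of [1, K] missing from
   N(phi), so that the vertices u of this completion carry base labels l(u)
   running bijectively over [1, K]. Relabel u by 2K + 2 + l(u) and add a hub
   labelled 2K + 2, joined to the u with l(u) not in E(phi), and an apex
   labelled K + 1, joined to every u. The edges of G and of the hub then carry
   each label of [1, K] exactly once, those of the apex carry [K + 2, 2K + 1],
   and the node labels are K + 1 and [2K + 2, 3K + 2]: all labels are distinct
   and fill [1, 3K + 2], so the labeling is total. The graph is connected
   through the apex, and the hub is adjacent to every vertex of G because a
   node label of phi is never an edge label. *)

Lemma imset_set2 (aT rT : finType) (f : aT -> rT) (a b : aT) :
  f @: [set a; b] = [set f a; f b].
Proof. by rewrite imsetU1 imset_set1. Qed.

Lemma edgesP (W : finType) (f : rel W) (S : {set W}) :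
  reflect (exists x y, f x y /\ S = [set x; y]) (S \in edges f).
Proof.
apply: (iffP imset2P) => [[x y _]|[x [y [fxy ->]]]].
  by rewrite inE => fxy ->; exists x, y.
by exists x y; rewrite ?inE.
Qed.

Section LabelCount.
Variables (W : finType) (f : rel W) (Phi : W -> nat).

(* On a two-element set [{x, y}] this is [2 max - (x + y) = |x - y|]. *)
Definition edge_label (S : {set W}) : nat :=
  (\max_(z in S) Phi z).*2 - \sum_(z in S) Phi z.

Lemma edge_label_set2 x y : x != y -> edge_label [set x; y] = absdiff (Phi x) (Phi y).
Proof.
move=> neq_xy; rewrite /edge_label /absdiff.
by rewrite big_setU1 ?big_setU1 /= ?big_set1 ?inE //; lia.
Qed.

Definition labels : seq nat := map Phi (enum W) ++ map edge_label (enum (edges f)).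

Lemma size_labels : size labels = nnodes f + nedges f.
Proof. by rewrite size_cat !size_map -enumT -cardT -cardE. Qed.

Hypotheses (f_irr : irreflexive f) (Phi_distinct : distinct_labeling f Phi).

Lemma edge_label_edge x y : f x y -> edge_label [set x; y] = absdiff (Phi x) (Phi y).
Proof.
move=> fxy; apply: edge_label_set2.
by apply: contraTneq fxy => <-; rewrite f_irr.
Qed.

Lemma mem_labels k : k \in labels <-> in_N Phi k \/ in_E f Phi k.
Proof.
rewrite mem_cat; split.
  case/orP=> /mapP[S]; first by rewrite mem_enum => _ ->; left; exists S.
  rewrite mem_enum => /edgesP[x [y [fxy ->]]] ->.
  by right; exists x, y; rewrite edge_label_edge.
case=> [[x <-]|[x [y [fxy <-]]]]; apply/orP; [left|right]; apply/mapP.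
  by exists x; rewrite ?mem_enum.
by exists [set x; y]; rewrite ?edge_label_edge // mem_enum; apply/edgesP; exists x, y.
Qed.

Lemma labels_uniq : uniq labels.
Proof.
case: Phi_distinct => _ [Phi_inj [edge_inj node_neq_edge]].
rewrite cat_uniq map_inj_uniq ?enum_uniq //=; apply/andP; split.
  apply/hasPn=> k /mapP[S]; rewrite mem_enum => /edgesP[x [y [fxy ->]]] ->.
  by apply/mapP=> -[z _]; rewrite edge_label_edge // => /esym; apply: node_neq_edge.
rewrite map_inj_in_uniq ?enum_uniq // => S S'.
rewrite !mem_enum => /edgesP[x [y [fxy ->]]] /edgesP[x' [y' [fxy' ->]]].
by rewrite !edge_label_edge //; apply: edge_inj.
Qed.

Lemma total_labeling_of_cover n :
  (forall k, (1 <= k <= n) <-> (in_N Phi k \/ in_E f Phi k)) ->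
  total_labeling f Phi.
Proof.
move=> cover; split=> // k.
suff -> : nnodes f + nedges f = n by apply: cover.
rewrite -size_labels -(size_iota 1 n); apply/perm_size/uniq_perm.
- exact: labels_uniq.
- exact: iota_uniq.
move=> k'; rewrite mem_iota add1n ltnS.
by apply/idP/idP => [/mem_labels/cover | /cover/mem_labels].
Qed.

End LabelCount.

Section Host.
Variables (V : finType) (e : rel V) (phi : V -> nat).

Definition max_label : nat := \max_(x : V) phi x.
Definition node_labelb (k : nat) : bool := [exists x, phi x == k].
Definition edge_labelb (k : nat) : bool :=
  [exists x, [exists y, e x y && (absdiff (phi x) (phi y) == k)]].

(* [j : missing_label] stands for the label [j + 1], which is not in [N(phi)]. *)
Definition missing_label := {j : 'I_max_label | ~~ node_labelb j.+1}.
Definition completed_vertex := (V + missing_label)%type.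
Definition host_vertex := (completed_vertex + bool)%type.

Local Notation hub := (inr true).
Local Notation apex := (inr false).

Definition base_label (u : completed_vertex) : nat :=
  match u with inl x => phi x | inr j => (val j).+1 end.

Definition host_label (w : host_vertex) : nat :=
  match w with
  | inl u => max_label.*2.+2 + base_label u
  | hub => max_label.*2.+2
  | apex => max_label.+1
  end.

Definition completed_rel (u u' : completed_vertex) : bool :=
  match u, u' with inl x, inl y => e x y | _, _ => false end.

Definition host_rel (v w : host_vertex) : bool :=
  match v, w with
  | inl u, inl u' => completed_rel u u'
  | inl u, hub | hub, inl u => ~~ edge_labelb (base_label u)
  | inl _, apex | apex, inl _ => true
  | inr _, inr _ => false
  end.

Local Notation host_edge_label v w := (absdiff (host_label v) (host_label w)).

Hypotheses (e_simple : simple_graph e) (phi_distinct : distinct_labeling e phi).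

Lemma phi_gt0 x : 0 < phi x.
Proof. by case: phi_distinct. Qed.

Lemma phi_inj : injective phi.
Proof. by case: phi_distinct => _ []. Qed.

Lemma phi_le_max x : phi x <= max_label.
Proof. exact: leq_bigmax. Qed.

Lemma base_label_bounds u : 0 < base_label u <= max_label.
Proof. by case: u => [x|[j _]] /=; rewrite ?phi_gt0 ?phi_le_max. Qed.

Lemma base_label_inj : injective base_label.
Proof.
have node_label x : node_labelb (phi x) by apply/existsP; exists x.
case=> [x|j] [y|k] //= eq_lab.
- by rewrite (phi_inj eq_lab).
- by move: (valP k); rewrite -eq_lab node_label.
- by move: (valP j); rewrite eq_lab node_label.
- by case: eq_lab => /val_inj/val_inj ->.
Qed.

Lemma base_label_onto k : 0 < k <= max_label -> exists u, base_label u = k.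
Proof.
move=> k_range; case node_k: (node_labelb k).
  by case/existsP: node_k => x /eqP <-; exists (inl x).
have lt_k : k.-1 < max_label by lia.
have missing_k : ~~ node_labelb (Ordinal lt_k).+1 by rewrite /= prednK ?node_k //; lia.
by exists (inr (exist _ (Ordinal lt_k) missing_k)) => /=; lia.
Qed.

Lemma edge_label_bounds x y : e x y -> 0 < absdiff (phi x) (phi y) <= max_label.
Proof.
move=> exy; have neq_phi : phi x != phi y.
  by apply: contraTneq exy => /phi_inj ->; case: e_simple => _ ->.
by move: (phi_le_max x) (phi_le_max y) neq_phi; rewrite /absdiff; lia.
Qed.

Lemma node_label_not_edge_label x : ~~ edge_labelb (phi x).
Proof.
apply/existsP=> -[u /existsP[v /andP[euv /eqP eq_lab]]].
by case: phi_distinct => _ [_ [_ node_neq_edge]]; apply: (node_neq_edge x u v euv).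
Qed.

Lemma host_rel_cases v w : host_rel v w ->
  [\/ exists x y, [/\ e x y, [set v; w] = [set inl (inl x); inl (inl y)]
                         & host_edge_label v w = absdiff (phi x) (phi y)],
      exists u, [/\ ~~ edge_labelb (base_label u), [set v; w] = [set inl u; hub]
                  & host_edge_label v w = base_label u]
    | exists u, [set v; w] = [set inl u; apex]
                /\ host_edge_label v w = max_label.+1 + base_label u].
Proof.
rewrite /absdiff; case: v => [u|[]]; case: w => [u'|[]] //= vw.
- case: u u' vw => [x|//] [y|//] exy.
  by apply: Or31; exists x, y; split=> //=; lia.
- by apply: Or32; exists u; split=> //=; lia.
- by apply: Or33; exists u; split=> //=; lia.
- by apply: Or32; exists u'; rewrite setUC; split=> //=; lia.
- by apply: Or33; exists u'; rewrite setUC; split=> //=; lia.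
Qed.

Lemma host_label_inj : injective host_label.
Proof.
case=> [u|[]] [u'|[]] //= eq_lab; first by rewrite (base_label_inj (addnI eq_lab)).
all: first [ move: (base_label_bounds u) eq_lab; lia
           | move: (base_label_bounds u') eq_lab; lia | lia ].
Qed.

Lemma host_edge_label_range v w : host_rel v w ->
  0 < host_edge_label v w <= max_label \/
  max_label.+1 < host_edge_label v w <= max_label.*2.+1.
Proof.
case/host_rel_cases=> [[x [y [exy _ ->]]]|[u [_ _ ->]]|[u [_ ->]]].
- by left; apply: edge_label_bounds.
- by left; apply: base_label_bounds.
- by right; move: (base_label_bounds u); lia.
Qed.

Lemma host_edge_label_inj v w v' w' : host_rel v w -> host_rel v' w' ->
  host_edge_label v w = host_edge_label v' w' -> [set v; w] = [set v'; w'].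
Proof.
have is_edge_label x y : e x y -> edge_labelb (absdiff (phi x) (phi y)).
  by move=> exy; apply/existsP; exists x; apply/existsP; exists y; rewrite exy eqxx.
case/host_rel_cases=> [[x [y [exy -> ->]]]|[u [nu -> ->]]|[u [-> ->]]];
case/host_rel_cases=> [[x' [y' [exy' -> ->]]]|[u' [nu' -> ->]]|[u' [-> ->]]] eq_lab.
- case: phi_distinct => _ [_ [edge_inj _]].
  have := congr1 (fun S : {set V} => [set (inl (inl z) : host_vertex) | z in S])
    (edge_inj _ _ _ _ exy exy' eq_lab).
  by rewrite /= !imset_set2.
- by move: nu'; rewrite -eq_lab is_edge_label.
- by move: (edge_label_bounds exy) eq_lab; lia.
- by move: nu; rewrite eq_lab is_edge_label.
- by rewrite (base_label_inj eq_lab).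
- by move: (base_label_bounds u) eq_lab; lia.
- by move: (edge_label_bounds exy') eq_lab; lia.
- by move: (base_label_bounds u') eq_lab; lia.
- by rewrite (base_label_inj (addnI eq_lab)).
Qed.

Lemma host_labeling_distinct : distinct_labeling host_rel host_label.
Proof.
split; first by case=> [u|[]] /=; lia.
split; first exact: host_label_inj.
split; first exact: host_edge_label_inj.
by move=> z v w /host_edge_label_range; case: z => [u|[]] /=; lia.
Qed.

Lemma host_small_edge_label k : 0 < k <= max_label -> in_E host_rel host_label k.
Proof.
move=> k_range; case edge_k: (edge_labelb k).
  case/existsP: edge_k => x /existsP[y /andP[exy /eqP <-]].
  by exists (inl (inl x)), (inl (inl y)); split=> //; rewrite /absdiff /=; lia.
have [u base_u] := base_label_onto k_range.
by exists (inl u), hub; rewrite /= base_u edge_k /absdiff; split=> //; lia.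
Qed.

Lemma host_labels_cover k :
  (1 <= k <= max_label.*2.+2 + max_label) <->
  (in_N host_label k \/ in_E host_rel host_label k).
Proof.
split=> [k_range|[[w <-]|[v [w [vw <-]]]]]; first last.
- by move: (host_edge_label_range vw); lia.
- by case: w => [u|[]] /=; [move: (base_label_bounds u) | |]; lia.
have [le_kK|lt_Kk] := leqP k max_label.
  by right; apply: host_small_edge_label; lia.
have [le_k_apex|lt_apex_k] := leqP k max_label.+1.
  by left; exists apex => /=; lia.
have [le_k_2K|lt_2K_k] := leqP k max_label.*2.+1.
  have [u base_u] : exists u, base_label u = k - max_label.+1.
    by apply: base_label_onto; lia.
  by right; exists (inl u), apex; split=> //; rewrite /absdiff /= base_u; lia.
have [le_k_hub|lt_hub_k] := leqP k max_label.*2.+2.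
  by left; exists hub => /=; lia.
have [u base_u] : exists u, base_label u = k - max_label.*2.+2.
  by apply: base_label_onto; lia.
by left; exists (inl u) => /=; rewrite base_u; lia.
Qed.

Lemma host_rel_sym : symmetric host_rel.
Proof.
by case: e_simple => e_sym _; case=> [[x|j]|[]] [[y|k]|[]] //=; rewrite e_sym.
Qed.

Lemma host_rel_irr : irreflexive host_rel.
Proof. by case: e_simple => _ e_irr; case=> [[x|j]|[]] //=; rewrite e_irr. Qed.

Lemma host_connected (x0 : V) : connected_graph host_rel.
Proof.
have to_apex v : connect host_rel v apex.
  case: v => [u|[]]; [exact: connect1 | | exact: connect0].
  apply: (connect_trans (y := inl (inl x0))); apply: connect1 => //=.
  exact: node_label_not_edge_label.
move=> v w; apply: connect_trans (to_apex v) _.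
by rewrite (sym_connect_sym host_rel_sym); apply: to_apex.
Qed.

Lemma host_induced_copy : has_induced_copy e host_rel.
Proof. by exists (fun x => inl (inl x)); split=> // x y []. Qed.

Lemma host_supergraceful : supergraceful host_rel.
Proof.
exists host_label.
apply: (total_labeling_of_cover host_rel_irr host_labeling_distinct).
exact: host_labels_cover.
Qed.

End Host.

Theorem theorem8p8 (V : finType) (e : rel V) :
  simple_graph e ->
  ~ supergraceful e ->
  forall phi : V -> nat, semitotal_labeling e phi -> in_N phi 1 ->
  exists (W : finType) (f : rel W),
    simple_graph f /\ connected_graph f /\ supergraceful f /\
    has_induced_copy e f.
Proof.
move=> e_simple _ phi [q0 [_ [phi_distinct _]]] [x0 _].
exists (host_vertex phi), (@host_rel V e phi); split.
  by split; [exact: host_rel_sym | exact: host_rel_irr].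
split; first exact: host_connected phi_distinct x0.
split; first exact: host_supergraceful.
exact: host_induced_copy.
Qed.
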